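(* Let $\{a_n\}_{n\in\mathbb Z}$ be i.i.d. random variables with values in $\{1,2,\dots\}$ with $\mathbb E[a_0]<\infty$ and $\mathbb P[a_0=1]>0$. Let $f(n)=n+a_n$ and let $T^f$ be the directed graph with vertex set $\mathbb Z$ and edge set $\{(n,f(n)):n\in\mathbb Z\}$. Then almost surely $T^f$ has only one connected component, i.e. for every $n\in\mathbb Z$ the set $C(n)=\{m\in\mathbb Z:\exists\, i,j\ge 0 \text{ with } f^i(n)=f^j(m)\}$ equals $\mathbb Z$.
   Context: $f^i$ denotes the $i$-th iterate of $f$, with $f^0$ the identity. *)

From HB Require Import structures.
From mathcomp Require Import all_boot all_order all_algebra.
From mathcomp Require Import all_classical all_reals all_analysis.
Set Implicit Arguments. Unset Strict Implicit. Unset Printing Implicit Defensive.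
Import Order.TTheory GRing.Theory Num.Theory.
Local Open Scope classical_set_scope.
Local Open Scope ring_scope.

Definition nat_rv_family d (T : measurableType d) (a : int -> T -> nat) : Prop :=
  forall (n : int) (k : nat), measurable (a n @^-1` [set k]).

(* Mutual independence: product rule over every finite family of distinct
   indices, for arbitrary target sets (nat carries the discrete sigma-algebra). *)
Definition mutually_independent d (T : measurableType d) (R : realType)
  (P : probability T R) (a : int -> T -> nat) : Prop :=
  forall (s : seq int) (B : int -> set nat), uniq s ->
    P (\big[setI/setT]_(i <- s) (a i @^-1` B i)) =
    (\prod_(i <- s) P (a i @^-1` B i))%E.

Definition identically_distributed d (T : measurableType d) (R : realType)
  (P : probability T R) (a : int -> T -> nat) : Prop :=
  forall (n : int) (B : set nat), P (a n @^-1` B) = P (a 0 @^-1` B).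

Definition fmap d (T : measurableType d) (a : int -> T -> nat) (x : T) (n : int) : int :=
  n + (a n x)%:Z.

Definition component d (T : measurableType d) (a : int -> T -> nat) (x : T) (n : int) : set int :=
  [set m | exists i j : nat, iter i (fmap a x) n = iter j (fmap a x) m].

From Pilot Require Import Defs.
From HB Require Import structures.
From mathcomp Require Import all_boot all_order all_algebra.
From mathcomp Require Import all_classical all_reals all_analysis.
From mathcomp Require Import measurable_realfun.
From mathcomp Require Import ring lra zify.
Import Order.TTheory GRing.Theory Num.Theory.
Local Open Scope classical_set_scope.
Local Open Scope ring_scope.

(* Call N + c a cut point of [N, N + c] when no jump a_n from a site n in [N, N + c)
   passes N + c: then the forward orbit of every site of [N, N + c] visits N + c, so all
   of them lie in one component.  Fix N and D and split [N + D, +oo) into consecutive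
   blocks of length l.  The right end of block k is a cut point as soon as (a) no jump from
   inside the block overshoots it, an event of probability prod_(1 <= t <= l) P(a_0 <= t),
   which stays above some c0 > 0 uniformly in l because P(a_0 = 1) > 0 and
   sum_t P(a_0 > t) = E a_0 < +oo, and (b) no jump from [N, block start) overshoots it,
   which fails with probability at most sum_(t > l) P(a_0 > t).  The events (a) are
   independent across blocks, so N + i and N + j (i, j <= D) are disconnected with
   probability at most (1 - c0)^r + r * sum_(t > l) P(a_0 > t), which is made arbitrarily
   small by choosing r and then l large. *)

Lemma negligible_small_covers d (T : measurableType d) (R : realType)
    (mu : {measure set T -> \bar R}) (A : set T) :
  (forall e : R, 0 < e ->
    exists Y, [/\ measurable Y, A `<=` Y & (mu Y <= e%:E)%E]) ->
  mu.-negligible A.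
Proof.
move=> covers.
have /choice[Y hY] : forall n : nat,
    exists Y, [/\ measurable Y, A `<=` Y & (mu Y <= (n.+1%:R^-1)%:E)%E].
  by move=> n; apply: covers; rewrite invr_gt0.
exists (\bigcap_n Y n); split.
- by apply: bigcap_measurable => [|n _]; [exists 0%N | have [] := hY n].
- apply/eqP; rewrite eq_le measure_ge0 andbT; apply/lee_addgt0Pr => e e0.
  rewrite add0e; have [n _ /(_ n (leqnn n)) ne] := near_infty_natSinv_lt (PosNum e0).
  have [mY _ muY] := hY n.
  apply: le_trans (le_trans muY _); last by rewrite lee_fin ltW.
  apply: le_measure; rewrite ?inE //; last by move=> x; apply.
  by apply: bigcap_measurable => [|k _]; [exists 0%N | have [] := hY k].
- by move=> x Ax n _; have [_ AY _] := hY n; exact: AY.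
Qed.

Lemma one_sub_sum_le_prod {R : realDomainType} {I : Type} (s : seq I) (x : I -> R) :
  (forall i, 0 <= x i <= 1) ->
  1 - \sum_(i <- s) x i <= \prod_(i <- s) (1 - x i).
Proof.
move=> x01; elim: s => [|i s IH]; first by rewrite !big_nil subr0.
rewrite !big_cons; have /andP[xi0 xi1] := x01 i.
have : 0 <= \sum_(j <- s) x j by apply: sumr_ge0 => j _; have /andP[] := x01 j.
nra.
Qed.

Lemma big_iota_rev {X : Type} {x : X} (op : Monoid.com_law x) (F : nat -> X) m n k :
  \big[op/x]_(i <- iota m n) F (m + n + k - i)%N =
  \big[op/x]_(k.+1 <= t < k.+1 + n) F t.
Proof.
have -> : iota m n = index_iota m (m + n) by rewrite /index_iota addKn.
rewrite big_nat_rev -{1}[m]add0n big_addn addKn -{1}[k.+1]add0n big_addn addKn.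
by apply: eq_big_nat => i /andP[_ lt_in]; congr F; lia.
Qed.

Lemma flatten_iota_blocks m l r :
  flatten [seq iota (m + k * l) l | k <- iota 0 r] = iota m (r * l).
Proof.
elim: r m => [|r IH] m //=.
rewrite addn0 -addn1 iotaD /= -(IH (m + l)) -[iota 1 r]/(iota (1 + 0) r) iotaDl -map_comp.
congr (_ ++ flatten _); apply: eq_map => k /=; congr iota; lia.
Qed.

Lemma sum_ltn_minn (u v : nat) : (\sum_(t < u) (t < v) = minn u v)%N.
Proof.
elim: u => [|u IH]; first by rewrite big_ord0 min0n.
by rewrite big_ord_recr /= IH; case: ltnP => ?; lia.
Qed.

Section RealProbability.
Context {d} {T : measurableType d} {R : realType} (P : probability T R).

Definition pr (A : set T) : R := fine (P A).

Lemma prE A : measurable A -> P A = (pr A)%:E.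
Proof. by move=> mA; rewrite /pr fineK //; apply: fin_num_measure. Qed.

Lemma pr_ge0 A : 0 <= pr A.
Proof. by rewrite /pr fine_ge0 // measure_ge0. Qed.

Lemma pr_le1 A : measurable A -> pr A <= 1.
Proof. by move=> mA; rewrite -lee_fin -prE //; apply: probability_le1. Qed.

Lemma prC A : measurable A -> pr (~` A) = 1 - pr A.
Proof. by move=> mA; rewrite /pr probability_setC // prE. Qed.

Lemma prD A B : measurable A -> measurable B -> pr (A `\` B) = pr A - pr (A `&` B).
Proof.
move=> mA mB; rewrite {1}/pr measureD //; last by rewrite ltey_eq fin_num_measure.
by rewrite fineB //; apply: fin_num_measure => //; apply: measurableI.
Qed.

Lemma pr_setT : pr setT = 1.
Proof. by rewrite /pr probability_setT. Qed.

Lemma le_pr A B : measurable A -> measurable B -> A `<=` B -> pr A <= pr B.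
Proof. by move=> mA mB AB; rewrite -lee_fin -!prE //; apply: le_measure; rewrite ?inE. Qed.

Lemma prU_le A B : measurable A -> measurable B -> pr (A `|` B) <= pr A + pr B.
Proof.
move=> mA mB; rewrite -lee_fin EFinD -!prE //; last exact: measurableU.
exact: measureU2.
Qed.

Lemma pr_bigsetU_le n (A : nat -> set T) : (forall i, measurable (A i)) ->
  pr (\big[setU/set0]_(i < n) A i) <= \sum_(i < n) pr (A i).
Proof.
move=> mA; rewrite -lee_fin -sumEFin -prE; last exact: bigsetU_measurable.
rewrite (eq_bigr (fun i : 'I_n => P (A i))) => [|i _]; last by rewrite prE.
exact: Boole_inequality.
Qed.

End RealProbability.

(* Mutual independence is stated for a selector [B : int -> set nat]; [lookup] builds one
   from a list of (index, set) pairs. *)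
Definition lookup {I : eqType} {V : Type} (v0 : V) (ps : seq (I * V)) (j : I) : V :=
  foldr (fun p v => if j == p.1 then p.2 else v) v0 ps.

Lemma big_lookup {I : eqType} {V X : Type} (v0 : V) (x : X) (op : X -> X -> X)
    (F : I * V -> X) (ps : seq (I * V)) :
  uniq (map fst ps) ->
  \big[op/x]_(p <- ps) F p = \big[op/x]_(j <- map fst ps) F (j, lookup v0 ps j).
Proof.
elim: ps => [|[i v] ps IH] /=; first by rewrite !big_nil.
case/andP=> i_notin uniq_ps; rewrite !big_cons /= eqxx IH //; congr (op _ _).
by apply: eq_big_seq => j j_in /=; case: eqP j_in i_notin => // -> ->.
Qed.

Section Reach.
Context {d} {T : measurableType d} {a : int -> T -> nat} {x : T}.
Hypothesis a_pos : forall n, (1 <= a n x)%N.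

Lemma iter_fmap_reach {N : int} {c : nat} :
  (forall i, (i < c)%N -> (a (N + i%:Z) x <= c - i)%N) ->
  forall i, (i <= c)%N -> exists k, iter k (Defs.fmap a x) (N + i%:Z) = N + c%:Z.
Proof.
move=> no_overshoot i; move: {2}(c - i)%N (leqnn (c - i)) => r.
elim: r i => [|r IH] i r_ge i_le; first by exists 0%N; have -> : i = c by lia.
have [->|i_ne] := eqVneq i c; first by exists 0%N.
have i_lt : (i < c)%N by rewrite ltn_neqAle i_ne.
have := no_overshoot i i_lt; have := a_pos (N + i%:Z) => jump_ge jump_le.
have [k hk] := IH (i + a (N + i%:Z) x)%N ltac:(lia) ltac:(lia).
by exists k.+1; rewrite iterSr -hk /Defs.fmap PoszD addrA.
Qed.

Lemma component_of_no_overshoot {N : int} {c : nat} :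
  (forall i, (i < c)%N -> (a (N + i%:Z) x <= c - i)%N) ->
  forall i j, (i <= c)%N -> (j <= c)%N -> component a x (N + i%:Z) (N + j%:Z).
Proof.
move=> no_overshoot i j i_le j_le.
have [k1 reach_i] := iter_fmap_reach no_overshoot _ i_le.
have [k2 reach_j] := iter_fmap_reach no_overshoot _ j_le.
by exists k1, k2; rewrite reach_i reach_j.
Qed.

End Reach.

Section IIDJumps.
Context d (T : measurableType d) (R : realType) (P : probability T R) (a : int -> T -> nat).
Hypothesis a_meas : nat_rv_family a.
Hypothesis a_indep : mutually_independent P a.

Definition jump_in (p : int * set nat) : set T := a p.1 @^-1` p.2.

Definition cylinder (ps : seq (int * set nat)) : set T := \big[setI/setT]_(p <- ps) jump_in p.

Lemma measurable_jump_in p : measurable (jump_in p).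
Proof.
have -> : jump_in p = \bigcup_(k in p.2) (a p.1 @^-1` [set k]).
  apply/seteqP; split => [x px|x [k pk /= akx]]; first by exists (a p.1 x).
  by rewrite /jump_in /= akx.
by apply: bigcup_measurable => k _; exact: a_meas.
Qed.

Lemma measurable_cylinder ps : measurable (cylinder ps).
Proof. by apply: bigsetI_measurable => p _; exact: measurable_jump_in. Qed.

Lemma cylinderP ps x : cylinder ps x <-> (forall p, p \in ps -> jump_in p x).
Proof. by rewrite /cylinder -bigcap_seq; split => [h p /h|h p /h]. Qed.

Lemma cylinder_cat ps qs : cylinder (ps ++ qs) = cylinder ps `&` cylinder qs.
Proof. exact: big_cat. Qed.

Lemma pr_cylinder ps : uniq (map fst ps) ->
  pr P (cylinder ps) = \prod_(p <- ps) pr P (jump_in p).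
Proof.
move=> u; rewrite /pr /cylinder !(big_lookup setT _ _ _ _ u).
rewrite (a_indep _ _ u) (eq_bigr (fun j => (pr P (jump_in (j, lookup setT ps j)))%:E)).
  by rewrite prodEFin.
by move=> j _; rewrite -prE //; exact: measurable_jump_in.
Qed.

Lemma pr_cylinder_cat ps qs : uniq (map fst (ps ++ qs)) ->
  pr P (cylinder (ps ++ qs)) = pr P (cylinder ps) * pr P (cylinder qs).
Proof.
move=> u; move: (u); rewrite map_cat cat_uniq => /and3P[u1 _ u2].
by rewrite !pr_cylinder // big_cat.
Qed.

Lemma pr_cylinder_bigcapC ps (qss : seq (seq (int * set nat))) :
  uniq (map fst (ps ++ flatten qss)) ->
  pr P (cylinder ps `&` \big[setI/setT]_(qs <- qss) ~` cylinder qs) =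
  pr P (cylinder ps) * \prod_(qs <- qss) (1 - pr P (cylinder qs)).
Proof.
(* Removing one complemented block leaves a cylinder over [ps ++ qs], hence the prefix. *)
elim: qss ps => [|qs qss IH] ps u; first by rewrite !big_nil setIT mulr1.
have uniq_sub s : subseq s (ps ++ qs ++ flatten qss) -> uniq (map fst s).
  by move=> /(map_subseq fst) /subseq_uniq; apply.
rewrite !big_cons /=; set rest := \big[setI/setT]_(_ <- qss) _.
have m_rest : measurable rest.
  by apply: bigsetI_measurable => q _; apply/measurableC/measurable_cylinder.
have -> : cylinder ps `&` (~` cylinder qs `&` rest) =
    (cylinder ps `&` rest) `\` cylinder qs by rewrite setDE setICA setIC.
rewrite prD; last exact: measurable_cylinder.
  2: by apply: measurableI => //; exact: measurable_cylinder.
rewrite setIAC -cylinder_cat !IH ?uniq_sub -?catA //; last first.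
  by apply: cat_subseq => //; exact: suffix_subseq.
by rewrite pr_cylinder_cat ?uniq_sub ?catA ?prefix_subseq //; ring.
Qed.

Hypothesis a_ident : identically_distributed P a.
Hypothesis a_pos : forall n x, (1 <= a n x)%N.
Hypothesis a_integrable : (\int[P]_x ((a 0 x)%:R : R)%:E < +oo)%E.
Hypothesis a_one : (0 < P (a 0 @^-1` [set 1%N]))%E.

Definition tail_prob (t : nat) : R := pr P (jump_in (0, [set v | (t < v)%N])).

Lemma pr_jump_in_shift n B : pr P (jump_in (n, B)) = pr P (jump_in (0, B)).
Proof. by rewrite /pr /jump_in /= a_ident. Qed.

Lemma pr_jump_le n t : pr P (jump_in (n, [set v | (v <= t)%N])) = 1 - tail_prob t.
Proof.
rewrite pr_jump_in_shift /tail_prob -prC; last exact: measurable_jump_in.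
by congr pr; apply/seteqP; split => x /=; lia.
Qed.

Lemma tail_prob_ge0 t : 0 <= tail_prob t.
Proof. exact: pr_ge0. Qed.

Lemma tail_prob_le1 t : tail_prob t <= 1.
Proof. exact/pr_le1/measurable_jump_in. Qed.

Lemma measurable_fun_jump_comp n (g : nat -> \bar R) :
  measurable_fun setT (fun x => g (a n x)).
Proof. by move=> _ Y _; rewrite setTI; exact: (measurable_jump_in (n, g @^-1` Y)). Qed.

Lemma sum_tail_prob_le_mean u :
  \sum_(t < u) tail_prob t <= fine (\int[P]_x ((a 0 x)%:R : R)%:E).
Proof.
have int_ge0 : (0 <= \int[P]_x ((a 0 x)%:R : R)%:E)%E.
  by apply: integral_ge0 => x _; rewrite lee_fin.
rewrite -lee_fin fineK ?ge0_fin_numE // -sumEFin.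
have tail_probE t : (tail_prob t)%:E = (\int[P]_x ((t < a 0 x)%N%:R : R)%:E)%E.
  rewrite -prE; last exact: measurable_jump_in.
  rewrite -[jump_in _]setIT -integral_indic //; last exact: measurable_jump_in.
  apply: eq_integral => x _; rewrite indicE.
  suff -> : (x \in jump_in (0, [set v | (t < v)%N])) = (t < a 0 x)%N by [].
  by apply/idP/idP; rewrite in_setE.
under eq_bigr do rewrite tail_probE.
rewrite -ge0_integral_sum // => [|t]; last first.
  exact: (measurable_fun_jump_comp 0 (fun v => ((t < v)%N%:R : R)%:E)).
apply: ge0_le_integral => //.
- by move=> x _; apply: sume_ge0 => t _; rewrite lee_fin.
- exact: (measurable_fun_jump_comp 0 (fun v => \sum_(t < u) ((t < v)%N%:R : R)%:E)%E).
- exact: (measurable_fun_jump_comp 0 (fun v => (v%:R : R)%:E)).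
by move=> x _; rewrite sumEFin lee_fin -natr_sum ler_nat sum_ltn_minn geq_minr.
Qed.

Lemma tail_prob_cauchy e : 0 < e ->
  exists L, forall u v, (L <= u)%N -> \sum_(u <= t < v) tail_prob t <= e.
Proof.
move=> e_gt0; pose S n := \sum_(0 <= t < n) tail_prob t.
have S_sup : has_sup (range S).
  split; first by exists (S 0%N), 0%N.
  exists (fine (\int[P]_x ((a 0 x)%:R : R)%:E)) => _ [n _ <-].
  by rewrite /S big_mkord; exact: sum_tail_prob_le_mean.
have [_ [L _ <-] SL_gt] := sup_adherent e_gt0 S_sup.
exists L => u v L_le; have [v_le|u_lt] := leqP v u; first by rewrite big_geq // ltW.
have Sv_le : S v <= sup (range S) by apply: sup_upper_bound => //; exists v.
have SvE : S v = S L + \sum_(L <= t < u) tail_prob t + \sum_(u <= t < v) tail_prob t.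
  by rewrite /S -!big_cat_nat // ltnW.
have : 0 <= \sum_(L <= t < u) tail_prob t by apply: sumr_ge0 => t _; exact: tail_prob_ge0.
lra.
Qed.

Lemma prod_one_sub_tail_prob_lbound :
  exists2 c0 : R, 0 < c0 & forall l, c0 <= \prod_(1 <= t < l.+1) (1 - tail_prob t).
Proof.
pose p1 := pr P (jump_in (0, [set 1%N])).
have p1_gt0 : 0 < p1 by rewrite -lte_fin -prE //; exact: measurable_jump_in.
have p1_le1 : p1 <= 1 by apply/pr_le1/measurable_jump_in.
have pow_le m : p1 ^+ m <= \prod_(1 <= t < m.+1) (1 - tail_prob t).
  rewrite big_add1 /= -[m in p1 ^+ m]card_ord -prodr_const big_mkord.
  apply: ler_prod => t _; rewrite (ltW p1_gt0) -(pr_jump_le 0) /=.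
  by apply: le_pr => [||x /= ->] //; exact: measurable_jump_in.
have half_gt0 : 0 < 2^-1 :> R by rewrite invr_gt0.
have [L tail_small] := tail_prob_cauchy _ half_gt0.
have pL_ge0 : 0 <= p1 ^+ L by rewrite exprn_ge0 // ltW.
exists (p1 ^+ L / 2) => [|l]; first by rewrite divr_gt0 // exprn_gt0.
have [l_le|L_lt] := leqP l L.
  have : p1 ^+ L <= p1 ^+ l by rewrite ler_wiXn2l // ltW.
  by have := pow_le l; lra.
rewrite (big_cat_nat (n := L.+1)) //=; last exact: ltnW.
have := pow_le L; have := tail_small L.+1 l.+1 (leqnSn L).
have tail_prob_01 t : 0 <= tail_prob t <= 1 by rewrite tail_prob_ge0 tail_prob_le1.
have := one_sub_sum_le_prod (index_iota L.+1 l.+1) _ tail_prob_01.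
nra.
Qed.

Section Windows.
Variables (N : int) (D l : nat).

Definition lands_by (c i : nat) : int * set nat := (N + i%:Z, [set v | (v <= c - i)%N]).

Definition block_start k := (D + k * l)%N.

Definition block_end k := (block_start k + l)%N.

Definition window k : seq (int * set nat) :=
  [seq lands_by (block_end k) i | i <- iota (block_start k) l].

Definition overshoot k : set T :=
  \big[setU/set0]_(i < block_start k) ~` jump_in (lands_by (block_end k) i).

Lemma map_fst_window k : map fst (window k) = [seq N + i%:Z | i <- iota (block_start k) l].
Proof. by rewrite -map_comp. Qed.

Lemma uniq_windows r : uniq (map fst (flatten [seq window k | k <- iota 0 r])).
Proof.
rewrite map_flatten -map_comp (eq_map map_fst_window) map_comp -map_flatten.
rewrite flatten_iota_blocks map_inj_uniq ?iota_uniq // => i j /addrI.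
by move/eqP; rewrite eqz_nat => /eqP.
Qed.

Lemma pr_window k : pr P (cylinder (window k)) = \prod_(1 <= t < l.+1) (1 - tail_prob t).
Proof.
rewrite pr_cylinder ?map_fst_window ?map_inj_uniq ?iota_uniq //; last first.
  by move=> i j /addrI /eqP; rewrite eqz_nat => /eqP.
rewrite big_map (eq_bigr (fun i => 1 - tail_prob (block_start k + l + 0 - i))) => [|i _].
  by rewrite (big_iota_rev _ (fun t => 1 - tail_prob t)).
by rewrite pr_jump_le addn0.
Qed.

Lemma pr_overshoot_le k :
  pr P (overshoot k) <= \sum_(l.+1 <= t < l.+1 + block_start k) tail_prob t.
Proof.
apply: le_trans (pr_bigsetU_le P _ _ (fun i => measurableC (measurable_jump_in _))) _.
pose F i := pr P (~` jump_in (lands_by (block_end k) i)).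
rewrite -(big_mkord xpredT F) /index_iota subn0.
rewrite (eq_bigr (fun i => tail_prob (0 + block_start k + l - i))) => [|i _].
  by rewrite (big_iota_rev _ tail_prob).
by rewrite /F prC ?pr_jump_le ?subKr ?add0n //; exact: measurable_jump_in.
Qed.

Lemma no_overshoot_of_window k x : cylinder (window k) x -> ~ overshoot k x ->
  forall i, (i < block_end k)%N -> (a (N + i%:Z) x <= block_end k - i)%N.
Proof.
move=> /cylinderP win not_over i i_lt.
have [i_lt_start|start_le_i] := ltnP i (block_start k).
  apply: contrapT => over; apply: not_over; rewrite /overshoot.
  exact: (bigsetU_sup (F := fun i => ~` jump_in (lands_by (block_end k) i)) i_lt_start).
by apply: (win (lands_by (block_end k) i)); apply: map_f; rewrite mem_iota start_le_i.
Qed.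

Definition bad_cover r : set T :=
  \big[setI/setT]_(k <- iota 0 r) ~` cylinder (window k) `|`
  \big[setU/set0]_(k < r) overshoot k.

Lemma measurable_bad_cover r : measurable (bad_cover r).
Proof.
apply: measurableU.
  by apply: bigsetI_measurable => k _; exact/measurableC/measurable_cylinder.
apply: bigsetU_measurable => k _; apply: bigsetU_measurable => i _.
exact/measurableC/measurable_jump_in.
Qed.

Lemma not_component_sub_bad_cover r i j : (i <= D)%N -> (j <= D)%N ->
  ~` [set x | component a x (N + i%:Z) (N + j%:Z)] `<=` bad_cover r.
Proof.
move=> i_le j_le x not_comp; apply: contrapT => not_cover; apply: not_comp.
have [k k_lt win] : exists2 k, (k < r)%N & cylinder (window k) x.
  apply: contrapT => no_win; apply: not_cover; left.
  rewrite -bigcap_seq => k /=; rewrite mem_iota add0n => k_lt win.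
  by apply: no_win; exists k.
have not_over : ~ overshoot k x.
  by move=> over; apply: not_cover; right; exact: (bigsetU_sup k_lt).
have D_le : (D <= block_end k)%N by rewrite /block_end /block_start -addnA leq_addr.
apply: (component_of_no_overshoot (a_pos^~ x) (no_overshoot_of_window k x win not_over)).
  exact: leq_trans D_le.
exact: leq_trans D_le.
Qed.

Lemma pr_bad_cover_le r delta :
  (forall b, \sum_(l.+1 <= t < l.+1 + b) tail_prob t <= delta) ->
  pr P (bad_cover r) <= (1 - \prod_(1 <= t < l.+1) (1 - tail_prob t)) ^+ r + r%:R * delta.
Proof.
move=> tail_le; apply: le_trans (prU_le P _ _ _ _) _.
- by apply: bigsetI_measurable => k _; exact/measurableC/measurable_cylinder.
- apply: bigsetU_measurable => k _; apply: bigsetU_measurable => i _.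
  exact/measurableC/measurable_jump_in.
apply: lerD.
  have := pr_cylinder_bigcapC [::] _ (uniq_windows r).
  rewrite [cylinder [::]]big_nil setTI pr_setT mul1r !big_map => ->.
  under eq_bigr do rewrite pr_window.
  by rewrite -[r in iota 0 r]subn0 prodr_const_nat subn0.
have over_le k : pr P (overshoot k) <= delta := le_trans (pr_overshoot_le k) (tail_le _).
apply: le_trans (pr_bigsetU_le P _ _ _) _.
  by move=> k; apply: bigsetU_measurable => i _; exact/measurableC/measurable_jump_in.
by rewrite mulr_natl -[r in _ *+ r]card_ord -sumr_const; apply: ler_sum => k _.
Qed.

End Windows.

Lemma component_pair_ae N i j : {ae P, forall x, component a x (N + i%:Z) (N + j%:Z)}.
Proof.
apply: negligible_small_covers => e e_gt0.
have [c0 c0_gt0 c0_le] := prod_one_sub_tail_prob_lbound.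
have c0_le1 : c0 <= 1 by have := c0_le 0%N; rewrite big_geq.
have [r geom_small] : exists r, (1 - c0) ^+ r <= e / 2.
  have /cvg_expr/cvgr0_norm_le : `|1 - c0| < 1 by rewrite ger0_norm; lra.
  move=> /(_ (e / 2)) /(_ (divr_gt0 e_gt0 (ltr0Sn _ 1))) [M _ /(_ M (leqnn M))].
  by rewrite ger0_norm ?exprn_ge0 ?subr_ge0 //; exists M.
pose delta := e / 2 / r.+1%:R.
have delta_gt0 : 0 < delta by rewrite !divr_gt0.
have [L tail_small] := tail_prob_cauchy _ delta_gt0.
exists (bad_cover N (maxn i j) L r); split.
- exact: measurable_bad_cover.
- by apply: not_component_sub_bad_cover; [exact: leq_maxl | exact: leq_maxr].
suff : pr P (bad_cover N (maxn i j) L r) <= e.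
  by rewrite -lee_fin -prE //; exact: measurable_bad_cover.
apply: le_trans (pr_bad_cover_le N (maxn i j) L r delta _) _.
  by move=> b; apply: tail_small; exact: leqnSn.
set q := \prod_(1 <= t < L.+1) (1 - tail_prob t).
have q_le1 : q <= 1.
  by rewrite /q -(pr_window N (maxn i j) L 0); exact/pr_le1/measurable_cylinder.
have : (1 - q) ^+ r <= (1 - c0) ^+ r.
  have c0_le_q : c0 <= q := c0_le L.
  by apply: lerXn2r; rewrite ?nnegrE; lra.
have : r%:R * delta <= e / 2.
  rewrite /delta mulrCA ler_piMr ?divr_ge0 ?(ltW e_gt0) //.
  by rewrite ler_pdivrMr ?ltr0Sn // mul1r ler_nat.
lra.
Qed.

End IIDJumps.

Theorem mainTheorem7 (d : measure_display) (T : measurableType d) (R : realType)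
  (P : probability T R) (a : int -> T -> nat) :
  nat_rv_family a ->
  mutually_independent P a ->
  identically_distributed P a ->
  (forall (n : int) (x : T), (1 <= a n x)%N) ->
  (\int[P]_x ((a 0%R x)%:R : R)%:E < +oo)%E ->
  (0 < P (a 0%R @^-1` [set 1%N]))%E ->
  {ae P, forall x, forall n : int, component a x n = [set: int]}.
Proof.
move=> a_meas a_indep a_ident a_pos a_integrable a_one.
have pairs : {ae P, forall x (D i j : nat), component a x (- D%:Z + i%:Z) (- D%:Z + j%:Z)}.
  apply: ae_foralln => D; apply: ae_foralln => i; apply: ae_foralln => j.
  exact: component_pair_ae.
apply: filterS pairs => x pairs n; apply/seteqP; split => // m _.
pose D := (`|n| + `|m|)%N.
have := pairs D (absz (n + D%:Z)) (absz (m + D%:Z)).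
have -> : - D%:Z + (absz (n + D%:Z))%:Z = n by rewrite /D; lia.
by have -> : - D%:Z + (absz (m + D%:Z))%:Z = m by rewrite /D; lia.
Qed.
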